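(* Let $S$ be a simple extension of degree $n$ of a field $k$ of characteristic $0$, let $c$ be a primitive element of $S/k$, and let $x\in S$ be non-zero. Let $V_c=\{b\in S^*\mid cb^2\text{ is a primitive element of }S/k\}$. Then the set $W_{c,x}=\{b\in V_c\mid \{xb^{-1},cb^2\}\neq 0\}$ is non-empty and open in $S^*$.
   Context: A $k$-algebra $S$ is a simple extension of degree $n$ of the field $k$ if there is $c\in S^*$ (a primitive element) such that $1,c,\dots,c^{n-1}$ is a $k$-basis of $S$. For a primitive element $d$ and $y\in S$, $\{y,d\}$ denotes the coefficient $y_{n-1}$ in the unique expression $y=\sum_{i=0}^{n-1}y_i d^i$ with $y_i\in k$. $S$ is identified with $\mathbb{A}^n(k)$ via a $k$-basis and given the Zariski topology; $S^*$ carries the subspace topology. *)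

From HB Require Import structures.
From mathcomp Require Import all_boot all_order all_algebra all_field.
From mathcomp Require Import mpoly.
Set Implicit Arguments. Unset Strict Implicit. Unset Printing Implicit Defensive.
Import GRing.Theory.
Local Open Scope ring_scope.

Section Defs.
Variables (k : fieldType) (S : falgType k).

Definition deg : nat := \dim {:S}.

Definition pow_tuple (d : S) : deg.-tuple S := [tuple d ^+ i | i < deg].

Definition primitive (d : S) : bool :=
  (d \is a GRing.unit) && basis_of fullv (pow_tuple d).

(* {y, d} : the coefficient y_(n-1) of y in the basis 1, d, ..., d^(n-1) *)
Definition topcoef (y d : S) : k :=
  \sum_(i < deg | i.+1 == deg) coord (pow_tuple d) i y.

(* coordinates of x in a fixed k-basis of S: identifies S with A^n(k) *)
Definition coords (x : S) : 'I_deg -> k := fun i => coord (vbasis {:S}) i x.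

Definition zariski_closed (A : S -> Prop) : Prop :=
  exists P : {mpoly k[deg]} -> Prop,
    forall x, A x <-> (forall p, P p -> p.@[coords x] = 0).

Definition zariski_open (U : S -> Prop) : Prop :=
  zariski_closed (fun x => ~ U x).

Definition open_in_units (W : S -> Prop) : Prop :=
  (forall b, W b -> b \is a GRing.unit) /\
  exists U, zariski_open U /\ forall b, b \is a GRing.unit -> (W b <-> U b).

Definition Vset (c : S) (b : S) : Prop :=
  b \is a GRing.unit /\ primitive (c * b ^+ 2).

Definition Wset (c x : S) (b : S) : Prop :=
  Vset c b /\ topcoef (x * b^-1) (c * b ^+ 2) != 0.

End Defs.

From HB Require Import structures.
From mathcomp Require Import all_boot all_order all_algebra all_field.
From mathcomp Require Import perm mpoly zify.
Set Implicit Arguments. Unset Strict Implicit. Unset Printing Implicit Defensive.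
Import GRing.Theory.
Local Open Scope ring_scope.

(** For a unit b put d = c b^2.  As b is invertible, {x b^-1, d} <> 0 says
    exactly that b, b d, ..., b d^(n-2), x is a basis of S; so, inside S^*, the
    set W_{c,x} is the non-vanishing locus of a product of two determinants,
    polynomial in the coordinates of b, and it is open.
    If {x, c} <> 0 then b = 1 lies in W_{c,x}.  Otherwise move along the line
    b = 1 + s e.  From b d^i = c^i + s U_i(s) we get
    x = s Y(s) + sum_(i < n-1) x_i b d^i, so for s <> 0 the family above is a
    basis as soon as b, b d, ..., b d^(n-2), Y(s) is one.  At s = 0 the latter
    is 1, c, ..., c^(n-2), -z e with z = sum_i (2i+1) x_i c^i, which is a basis
    for a suitable e since z <> 0 in characteristic 0.  Each requirement (b a
    unit, the powers of d a basis, the family a basis) then fails only at the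
    roots of a nonzero polynomial in s, and k is infinite. *)

Record funring_closed (A : Type) (R : pzRingType) (P : (A -> R) -> Prop) : Prop :=
  FunringClosed {
    funring_ext : forall f g, f =1 g -> P f -> P g;
    funring_const : forall r, P (fun=> r);
    funring_add : forall f g, P f -> P g -> P (fun a => f a + g a);
    funring_mul : forall f g, P f -> P g -> P (fun a => f a * g a) }.

Section RingClosure.
Variables (A : Type) (R : pzRingType) (P : (A -> R) -> Prop).
Hypothesis P_closed : funring_closed P.
Local Notation P_ext := (funring_ext P_closed).
Local Notation P_const := (funring_const P_closed).
Local Notation P_add := (funring_add P_closed).
Local Notation P_mul := (funring_mul P_closed).

Lemma closed_sum (I : Type) (r : seq I) (F : I -> A -> R) :
  (forall i, P (F i)) -> P (fun a => \sum_(i <- r) F i a).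
Proof.
move=> PF; elim: r => [|i r IHr].
  by apply: P_ext (P_const 0) => a; rewrite big_nil.
by apply: P_ext (P_add (PF i) IHr) => a; rewrite big_cons.
Qed.

Lemma closed_prod (I : Type) (r : seq I) (F : I -> A -> R) :
  (forall i, P (F i)) -> P (fun a => \prod_(i <- r) F i a).
Proof.
move=> PF; elim: r => [|i r IHr].
  by apply: P_ext (P_const 1) => a; rewrite big_nil.
by apply: P_ext (P_mul (PF i) IHr) => a; rewrite big_cons.
Qed.

Lemma closed_det m (F : 'I_m -> 'I_m -> A -> R) :
  (forall i j, P (F i j)) -> P (fun a => \det (\matrix_(i, j) F i j a)).
Proof.
move=> PF; pose G (s : 'S_m) a := (-1) ^+ s * \prod_i F i (s i) a.
apply: P_ext (closed_sum (index_enum _) (F := G) _) => [a|s].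
  by apply: eq_bigr => s _; congr (_ * _); apply: eq_bigr => i _; rewrite mxE.
exact: P_mul (P_const _) (closed_prod _ (fun i => PF i (s i))).
Qed.

End RingClosure.

Section FreeFamilies.
Variables (k : fieldType) (S : falgType k).
Local Notation n := (deg S).
Implicit Types (V T : 'I_n -> S) (d u v w y : S).

Lemma free_mktupleP V :
  reflect (forall a : 'I_n -> k, \sum_i a i *: V i = 0 -> forall i, a i = 0)
          (free (mktuple V)).
Proof.
have sumE (a : 'I_n -> k) : \sum_i a i *: (mktuple V)`_i = \sum_i a i *: V i.
  by apply: eq_bigr => i _; rewrite nth_mktuple.
by apply: (iffP freeP) => fV a; [rewrite -sumE | rewrite sumE]; exact: fV.
Qed.

Lemma basis_fullvE (X : n.-tuple S) : basis_of fullv X = free X.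
Proof. by rewrite basisEfree subvf size_tuple leqnn !andbT. Qed.

Lemma primitiveE d : primitive d = (d \is a GRing.unit) && free (pow_tuple d).
Proof. by rewrite /primitive basis_fullvE. Qed.

Lemma coord_mktuple_basis V v :
  free (mktuple V) -> v = \sum_i coord (mktuple V) i v *: V i.
Proof.
move=> fV; rewrite {1}(@coord_basis _ _ fullv _ (mktuple V) v) ?basis_fullvE ?memvf //.
by apply: eq_bigr => i _; rewrite nth_mktuple.
Qed.

Lemma coords_vbasis v : v = \sum_j coords v j *: (vbasis fullv)`_j.
Proof. exact: (coord_vbasis (memvf v)). Qed.

Lemma coords_mul u w j : coords (u * w) j =
  \sum_l \sum_m coords u l * coords w m * coords ((vbasis fullv)`_l * (vbasis fullv)`_m) j.
Proof.
rewrite {1}(coords_vbasis u) {1}(coords_vbasis w) mulr_suml /coords linear_sum.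
apply: eq_bigr => l _; rewrite mulr_sumr linear_sum; apply: eq_bigr => m _.
by rewrite -scalerAl -scalerAr !linearZ /= mulrA.
Qed.

Definition coordmat V : 'M[k]_n := \matrix_(i, j) coords (V i) j.

Lemma free_coordmat V : free (mktuple V) = (\det (coordmat V) != 0).
Proof.
apply/idP/idP => [fV | detV].
  pose N : 'M[k]_n := \matrix_(j, l) coord (mktuple V) l (vbasis fullv)`_j.
  suff /mulmx1_unit[+ _] : coordmat V *m N = 1%:M by rewrite -unitfE -unitmxE.
  apply/matrixP => i l; rewrite !mxE.
  under eq_bigr do rewrite !mxE -linearZ /=.
  by rewrite -linear_sum -coords_vbasis; have := coord_free i l fV; rewrite nth_mktuple.
apply/free_mktupleP => a aV i.
have /rowP/(_ i) : \row_i a i *m coordmat V *m invmx (coordmat V) = 0.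
  suff -> : \row_i a i *m coordmat V = 0 by rewrite mul0mx.
  apply/rowP => j; rewrite !mxE.
  under eq_bigr do rewrite !mxE /coords -linearZ /=.
  by rewrite -linear_sum aV linear0.
by rewrite mulmxK ?unitmxE ?unitfE // !mxE.
Qed.

Lemma free_replace V T l (s : k) (a : 'I_n -> k) : s != 0 ->
  (forall i, i != l -> V i = T i) ->
  V l = s *: T l + \sum_(i | i != l) a i *: T i ->
  free (mktuple T) -> free (mktuple V).
Proof.
move=> s0 VT Vl /free_mktupleP fT; apply/free_mktupleP => b bV.
pose b' i := if i == l then b l * s else b i + b l * a i.
have b'0 : forall i, b' i = 0.
  apply: fT; rewrite -[RHS]bV (bigD1 l) // [RHS](bigD1 l) //= /b' eqxx Vl.
  rewrite scalerDr scalerA scaler_sumr -addrA; congr (_ + _).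
  rewrite -big_split; apply: eq_bigr => i il /=.
  by rewrite (negbTE il) VT // scalerDl scalerA addrC.
have bl : b l = 0.
  by apply/eqP; have /eqP := b'0 l; rewrite /b' eqxx mulf_eq0 (negbTE s0) orbF.
move=> i; have := b'0 i; rewrite /b'.
by case: eqP => [-> | _]; rewrite ?bl // mul0r addr0.
Qed.

Lemma exists_coord_neq0 V v : free (mktuple V) -> v != 0 ->
  exists i, coord (mktuple V) i v != 0.
Proof.
move=> fV v0; apply/existsP; apply: contraNT v0 => /existsPn coord0.
rewrite [v](coord_mktuple_basis v fV) big1 // => i _.
by rewrite (eqP (negPn (coord0 i))) scale0r.
Qed.

Lemma coord_pow_tuple d (i : 'I_n) m : free (pow_tuple d) -> (m < n)%N ->
  coord (pow_tuple d) i (d ^+ m) = (i == m :> nat)%:R.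
Proof.
move=> fd mn; have := coord_free (Ordinal mn) i fd.
by rewrite /pow_tuple nth_mktuple eq_sym => ->.
Qed.

Lemma unit_of_free_mull u V : (forall v w, v * w = w * v) ->
  free (mktuple (fun i => u * V i)) -> u \is a GRing.unit.
Proof.
move=> mulC fuV; pose w := \sum_i coord (mktuple (fun i => u * V i)) i 1 *: V i.
have uw : u * w = 1.
  rewrite [RHS](coord_mktuple_basis 1 fuV) mulr_sumr.
  by apply: eq_bigr => i _; rewrite scalerAr.
by apply/unitrP; exists w; rewrite mulC uw.
Qed.

Lemma free_mull_unit u V :
  u \is a GRing.unit -> free (mktuple (fun i => u * V i)) = free (mktuple V).
Proof.
have freeM u' V' : u' \is a GRing.unit ->
    free (mktuple V') -> free (mktuple (fun i => u' * V' i)).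
  move=> uU /free_mktupleP fV; apply/free_mktupleP => a aV; apply: fV.
  suff -> : \sum_i a i *: V' i = u'^-1 * \sum_i a i *: (u' * V' i) by rewrite aV mulr0.
  by rewrite mulr_sumr; apply: eq_bigr => i _; rewrite -scalerAr mulKr.
move=> uU; apply/idP/idP; last exact: freeM.
by move/(freeM u^-1); rewrite unitrV; under eq_mktuple do rewrite mulKr //; apply.
Qed.

Lemma deg_gt0 : (0 < n)%N.
Proof.
rewrite lt0n dimv_eq0; apply/negP => /eqP S0.
by have := memvf (1 : S); rewrite S0 memv0 oner_eq0.
Qed.

Definition top_index : 'I_n := Ordinal (etrans (ltn_predL n) deg_gt0).

Lemma topcoefE y d : topcoef y d = coord (pow_tuple d) top_index y.
Proof.
rewrite /topcoef (big_pred1 top_index) // => i /=.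
rewrite -(inj_eq val_inj) /=; move: (nat_of_ord i) => m.
by rewrite -{1}(prednK deg_gt0) eqSS.
Qed.

Lemma free_replace_top d y : free (pow_tuple d) ->
  free (mktuple (fun i => if i == top_index then y else d ^+ i)) = (topcoef y d != 0).
Proof.
move=> fd; pose a i := coord (pow_tuple d) i y; rewrite topcoefE -/(a top_index).
have yE : y = a top_index *: d ^+ top_index + \sum_(i | i != top_index) a i *: d ^+ i.
  by rewrite [y in LHS](coord_mktuple_basis y fd) (bigD1 top_index).
apply/idP/idP => [/free_mktupleP fy | ay].
  apply/eqP => ay0.
  have /(_ top_index) : forall i, (if i == top_index then -1 else a i) = 0.
    apply: fy; rewrite (bigD1 top_index) //= eqxx scaleN1r {1}yE ay0 scale0r add0r.
    by apply/eqP; rewrite addrC subr_eq0; apply/eqP/eq_bigr => i /negbTE ->.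
  by move=> /eqP; rewrite /= eqxx oppr_eq0 oner_eq0.
apply: (free_replace (l := top_index) ay _ _ fd) => [i /negbTE -> //|].
by rewrite eqxx {1}yE; congr (_ + _); apply: eq_bigr => i /negbTE ->.
Qed.

Lemma pow_free_comm d : free (pow_tuple d) -> forall u v, u * v = v * u.
Proof.
move=> fd; have dC u : GRing.comm d u.
  rewrite /GRing.comm (coord_mktuple_basis u fd) mulr_sumr mulr_suml.
  by apply: eq_bigr => i _; rewrite -scalerAr -scalerAl -exprS -exprSr.
move=> u v; rewrite (coord_mktuple_basis v fd) mulr_sumr mulr_suml.
by apply: eq_bigr => i _; rewrite -scalerAr -scalerAl; congr (_ *: _); apply/commrX/esym/dC.
Qed.

End FreeFamilies.
Arguments top_index {k S}.

Section CoordinatewiseClosure.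
Variables (k : fieldType) (S : falgType k) (A : Type) (P : (A -> k) -> Prop).
Hypothesis P_closed : funring_closed P.
Local Notation P_ext := (funring_ext P_closed).
Local Notation P_const := (funring_const P_closed).
Local Notation P_add := (funring_add P_closed).
Local Notation P_mul := (funring_mul P_closed).
Local Notation n := (deg S).
Implicit Types (V W : A -> S).
Let sum_closed := closed_sum P_closed.

Definition coordwise V := forall j, P (fun a => coords (V a) j).

Lemma coordwise_const v : coordwise (fun=> v).
Proof. by move=> j; apply: P_const. Qed.

Lemma coordwise_add V W : coordwise V -> coordwise W -> coordwise (fun a => V a + W a).
Proof.
by move=> PV PW j; apply: P_ext (P_add (PV j) (PW j)) => a; rewrite /coords linearD.
Qed.

Lemma coordwise_scale f V : P f -> coordwise V -> coordwise (fun a => f a *: V a).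
Proof. by move=> Pf PV j; apply: P_ext (P_mul Pf (PV j)) => a; rewrite /coords linearZ. Qed.

Lemma coordwise_mul V W : coordwise V -> coordwise W -> coordwise (fun a => V a * W a).
Proof.
move=> PV PW j; apply: P_ext (sum_closed _ (fun l => sum_closed _ (fun m =>
  P_mul (P_mul (PV l) (PW m)) (P_const _)))) => a.
by rewrite coords_mul.
Qed.

Lemma coordwise_exp V m : coordwise V -> coordwise (fun a => V a ^+ m).
Proof.
move=> PV; elim: m => [|m IHm] j.
  by apply: P_ext (P_const (coords 1 j)) => a; rewrite expr0.
by apply: P_ext (coordwise_mul PV IHm j) => a; rewrite exprS.
Qed.

Lemma coordwise_sum (I : Type) (r : seq I) (F : I -> A -> S) :
  (forall i, coordwise (F i)) -> coordwise (fun a => \sum_(i <- r) F i a).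
Proof.
move=> PF j; apply: P_ext (sum_closed r (fun i => PF i j)) => a.
by rewrite /coords linear_sum.
Qed.

Lemma closed_det_coordmat (V : 'I_n -> A -> S) : (forall i, coordwise (V i)) ->
  P (fun a => \det (coordmat (fun i => V i a))).
Proof. by move=> PV; apply: (closed_det P_closed) => i j; apply: PV. Qed.

End CoordinatewiseClosure.

Section PolynomialFunctions.
Variables (k : fieldType) (S : falgType k).
Local Notation n := (deg S).

Definition mpoly_fun (g : S -> k) :=
  exists p : {mpoly k[n]}, forall b, g b = p.@[coords b].

Lemma mpoly_fun_closed : funring_closed mpoly_fun.
Proof.
split=> [f g fg [p fE] | r | f g [p fE] [q gE] | f g [p fE] [q gE]].
- by exists p => b; rewrite -fg.
- by exists r%:MP => b; rewrite mevalC.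
- by exists (p + q) => b; rewrite mevalD fE gE.
- by exists (p * q) => b; rewrite mevalM fE gE.
Qed.

Lemma mpoly_fun_coords : coordwise mpoly_fun (@id S).
Proof. by move=> j; exists 'X_j => b; rewrite mevalXU. Qed.

Definition poly_fun (g : k -> k) := exists q : {poly k}, forall s, g s = q.[s].

Lemma poly_fun_closed : funring_closed poly_fun.
Proof.
split=> [f g fg [p fE] | r | f g [p fE] [q gE] | f g [p fE] [q gE]].
- by exists p => s; rewrite -fg.
- by exists r%:P => s; rewrite hornerC.
- by exists (p + q) => s; rewrite hornerD fE gE.
- by exists (p * q) => s; rewrite hornerM fE gE.
Qed.

Lemma poly_fun_id : poly_fun id.
Proof. by exists 'X => s; rewrite hornerX. Qed.

Lemma free_off_roots (R : 'I_n -> k -> S) :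
  (forall i, coordwise poly_fun (R i)) -> free (mktuple (fun i => R i 0)) ->
  exists2 q : {poly k}, q != 0 & forall s, q.[s] != 0 -> free (mktuple (fun i => R i s)).
Proof.
move=> PR fR0; have [q qE] := closed_det_coordmat poly_fun_closed PR.
exists q => [|s]; last by rewrite free_coordmat qE.
by apply: contraTneq fR0 => q0; rewrite free_coordmat qE q0 horner0 eqxx.
Qed.

End PolynomialFunctions.
Arguments mpoly_fun {k S}.
Arguments mpoly_fun_closed {k S}.
Arguments mpoly_fun_coords {k S}.
Arguments poly_fun {k}.
Arguments poly_fun_closed {k}.
Arguments poly_fun_id {k}.

Lemma pchar0_exists_nonroot (k : fieldType) (q : {poly k}) :
  [pchar k] =i pred0 -> q != 0 -> exists s, q.[s] != 0.
Proof.
move=> /pcharf0P char0 q0.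
have natr_inj : injective (fun i : nat => i%:R : k).
  move=> i j /= /eqP; rewrite -subr_eq0; have [ij|/ltnW ji] := leqP i j.
    rewrite -oppr_eq0 opprB -natrB // char0 subn_eq0 => ji.
    by apply/eqP; rewrite eqn_leq ij.
  by rewrite -natrB // char0 subn_eq0 => ij; apply/eqP; rewrite eqn_leq ij.
pose rs := [seq i%:R : k | i <- iota 0 (size q)].
have [qrs | /allPn[s _ qs]] := boolP (all (root q) rs); last by exists s.
case/eqP: q0; apply: (roots_geq_poly_eq0 qrs).
  by rewrite map_inj_uniq ?iota_uniq.
by rewrite size_map size_iota.
Qed.

Section SimpleExtension.
Variables (k : fieldType) (S : falgType k) (c : S).
Hypothesis c_primitive : primitive c.
Local Notation n := (deg S).

Let c_free : free (pow_tuple c).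
Proof. by move: c_primitive; rewrite primitiveE => /andP[]. Qed.

Let mulC : forall u v : S, u * v = v * u := pow_free_comm c_free.

Definition Wfamily (y b : S) : 'I_n -> S :=
  fun i => if i == top_index then y else b * (c * b ^+ 2) ^+ i.

Lemma Wset_unitE x b : b \is a GRing.unit ->
  Wset c x b <-> free (pow_tuple (c * b ^+ 2)) /\ free (mktuple (Wfamily x b)).
Proof.
move=> bU; have dU : c * b ^+ 2 \is a GRing.unit.
  by rewrite unitrMl ?unitrX //; case/andP: c_primitive.
have topE : free (pow_tuple (c * b ^+ 2)) ->
    (topcoef (x * b^-1) (c * b ^+ 2) != 0) = free (mktuple (Wfamily x b)).
  move=> fd; rewrite -free_replace_top // -(free_mull_unit _ bU); congr (free (tval _)).
  apply: eq_mktuple => i; rewrite /Wfamily.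
  by case: (i == top_index); rewrite // mulC mulrVK.
rewrite /Wset /Vset primitiveE bU dU.
by split=> [[[_ fd] tc] | [fd fW]]; [split; rewrite -?topE | split; rewrite ?topE].
Qed.

Lemma Wset_open x : open_in_units (Wset c x).
Proof.
split=> [b [[]] // | ].
have cb2 : coordwise mpoly_fun (fun b : S => c * b ^+ 2) :=
  coordwise_mul mpoly_fun_closed (coordwise_const mpoly_fun_closed c)
    (coordwise_exp mpoly_fun_closed 2 mpoly_fun_coords).
have [f fE] : mpoly_fun (fun b => \det (coordmat (fun i => (c * b ^+ 2) ^+ i)) *
                                  \det (coordmat (fun i => Wfamily x b i))).
  apply: (funring_mul mpoly_fun_closed); apply: (closed_det_coordmat mpoly_fun_closed) => i.
    exact (coordwise_exp mpoly_fun_closed i cb2).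
  rewrite /Wfamily; case: (i == top_index); first exact (coordwise_const mpoly_fun_closed x).
  exact (coordwise_mul mpoly_fun_closed mpoly_fun_coords
    (coordwise_exp mpoly_fun_closed i cb2)).
exists (fun b => f.@[coords b] != 0); split.
  exists (eq^~ f) => b; split=> [/negP/negbNE/eqP fb0 _ -> // | fb0].
  by rewrite (fb0 f) // eqxx.
move=> b bU; rewrite Wset_unitE // -fE mulf_eq0 negb_or -!free_coordmat.
exact: (rwP andP).
Qed.

(* [tangent x * e] is the derivative at [s = 0] of [\sum_i x_i b d^i] along
   [b = 1 + s e], [d = c b^2]. *)
Definition tangent (x : S) : S :=
  \sum_(i < n) (((2 * i).+1)%:R * coord (pow_tuple c) i x) *: c ^+ i.

Lemma tangent_neq0 x : [pchar k] =i pred0 -> x != 0 -> tangent x != 0.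
Proof.
move=> /pcharf0P char0 x0; have [j xj] := exists_coord_neq0 c_free x0.
have tj : coord (pow_tuple c) j (tangent x) != 0.
  rewrite (_ : tangent x =
      \sum_(i < n) (((2 * i).+1)%:R * coord (pow_tuple c) i x) *: (pow_tuple c)`_i).
    by rewrite coord_sum_free // mulf_neq0 // char0.
  by apply: eq_bigr => i _; rewrite /pow_tuple nth_mktuple.
by apply: contraTneq tj => ->; rewrite linear0 eqxx.
Qed.

Lemma topcoef_mul_neq0 z : z != 0 -> exists e, topcoef (z * e) c != 0.
Proof.
move=> z0; have [j zj] := exists_coord_neq0 c_free z0.
have [r zr rmax] := @arg_maxnP _ j (fun i => coord (pow_tuple c) i z != 0) val zj.
have rn : (r <= n.-1)%N by rewrite -ltnS prednK ?deg_gt0.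
exists (c ^+ (n.-1 - r)).
rewrite topcoefE [z in z * _](coord_mktuple_basis z c_free) mulr_suml linear_sum.
rewrite (bigD1 r) //= big1 ?addr0 => [|i ir].
  rewrite -scalerAl -exprD subnKC // linearZ /= coord_pow_tuple ?eqxx ?mulr1 //.
  by rewrite ltn_predL deg_gt0.
rewrite -scalerAl -exprD linearZ /=.
have [-> | zi] := eqVneq (coord (pow_tuple c) i z) 0; first by rewrite mul0r.
have ltir : (i < r)%N by rewrite ltn_neqAle ir; exact: rmax.
have n0 := deg_gt0 S.
rewrite coord_pow_tuple //=; last by lia.
by rewrite (_ : (n.-1 == _) = false) ?mulr0 //; lia.
Qed.

Section Perturbation.
Variables (x e : S).

Definition curve (s : k) : S := 1 + s *: e.

Lemma curve0 : curve 0 = 1.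
Proof. by rewrite /curve scale0r addr0. Qed.

Let curve_coordwise : coordwise poly_fun curve :=
  coordwise_add poly_fun_closed (coordwise_const poly_fun_closed 1)
    (coordwise_scale poly_fun_closed poly_fun_id (coordwise_const poly_fun_closed e)).

Let curve_sq_coordwise : coordwise poly_fun (fun s => c * curve s ^+ 2) :=
  coordwise_mul poly_fun_closed (coordwise_const poly_fun_closed c)
    (coordwise_exp poly_fun_closed 2 curve_coordwise).

Let xc i := coord (pow_tuple c) i x.
Let U (i : 'I_n) s := c ^+ i * e * \sum_(m < (2 * i).+1) curve s ^+ m.
Let Y s := \sum_i (- xc i) *: U i s.

Let curve_powE s (i : 'I_n) : curve s * (c * curve s ^+ 2) ^+ i = c ^+ i + s *: U i s.
Proof.
rewrite exprMn_comm; last exact: mulC.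
rewrite -exprM mulrA (mulC (curve s)) -mulrA -exprS.
have : curve s ^+ (2 * i).+1 - 1 = s *: e * \sum_(m < (2 * i).+1) curve s ^+ m.
  by rewrite subrX1 /curve [1 + _]addrC addrK.
move/eqP; rewrite subr_eq => /eqP ->.
by rewrite mulrDr mulr1 addrC -scalerAl -scalerAr mulrA.
Qed.

Let Y0 : Y 0 = - (tangent x * e).
Proof.
rewrite /Y /tangent mulr_suml -sumrN; apply: eq_bigr => i _.
rewrite /U curve0; under eq_bigr do rewrite expr1n.
rewrite sumr_const card_ord mulr_natr -scaler_nat scalerA mulNr scaleNr.
by rewrite -scalerAl mulrC.
Qed.

Let Wfamily_curve_free s : topcoef x c = 0 -> s != 0 ->
  free (mktuple (Wfamily (Y s) (curve s))) -> free (mktuple (Wfamily x (curve s))).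
Proof.
move=> tx0 s0; have xc_lst : xc top_index = 0 by rewrite /xc -topcoefE.
apply: (free_replace (l := top_index) (a := xc) s0) => [i /negbTE il|].
  by rewrite /Wfamily il.
have xE : x = \sum_(i | i != top_index) xc i *: c ^+ i.
  rewrite [x in LHS](coord_mktuple_basis x c_free) (bigD1 top_index) //=.
  by rewrite -topcoefE tx0 scale0r add0r.
have YE : s *: Y s = - \sum_(i | i != top_index) s *: (xc i *: U i s).
  rewrite /Y scaler_sumr (bigD1 top_index) //= xc_lst oppr0 !scale0r scaler0 add0r -sumrN.
  by apply: eq_bigr => i _; rewrite scaleNr scalerN.
rewrite /Wfamily eqxx (eq_bigr (fun i => xc i *: c ^+ i + s *: (xc i *: U i s))).
  by rewrite big_split -xE YE addrC addrK.
by move=> i /negbTE ->; rewrite curve_powE scalerDr !scalerA mulrC.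
Qed.

Lemma curve_unit_off_roots :
  exists2 q : {poly k}, q != 0 & forall s, q.[s] != 0 -> curve s \is a GRing.unit.
Proof.
have PR (i : 'I_n) : coordwise poly_fun (fun s => curve s * c ^+ i) :=
  coordwise_mul poly_fun_closed curve_coordwise (coordwise_const poly_fun_closed _).
have fR0 : free (mktuple (fun i : 'I_n => curve 0 * c ^+ i)).
  by rewrite curve0 (eq_mktuple _ (fun i => mul1r (c ^+ i))).
have [q q0 fq] := free_off_roots PR fR0.
by exists q => // s /fq; apply: unit_of_free_mull.
Qed.

Lemma curve_pow_free_off_roots :
  exists2 q : {poly k}, q != 0 & forall s, q.[s] != 0 -> free (pow_tuple (c * curve s ^+ 2)).
Proof.
have PR (i : 'I_n) : coordwise poly_fun (fun s => (c * curve s ^+ 2) ^+ i) :=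
  coordwise_exp poly_fun_closed i curve_sq_coordwise.
have fR0 : free (mktuple (fun i : 'I_n => (c * curve 0 ^+ 2) ^+ i)).
  by rewrite curve0 expr1n mulr1.
by have [q q0 fq] := free_off_roots PR fR0; exists q.
Qed.

Lemma Wfamily_curve_off_roots : topcoef x c = 0 -> topcoef (tangent x * e) c != 0 ->
  exists2 q : {poly k}, q != 0 &
    forall s, s != 0 -> q.[s] != 0 -> free (mktuple (Wfamily x (curve s))).
Proof.
move=> tx0 te.
have PU (i : 'I_n) : coordwise poly_fun (U i) :=
  coordwise_mul poly_fun_closed (coordwise_const poly_fun_closed _)
    (coordwise_sum poly_fun_closed _
      (fun m : 'I_(2 * i).+1 => coordwise_exp poly_fun_closed m curve_coordwise)).
have PR (i : 'I_n) : coordwise poly_fun (fun s => Wfamily (Y s) (curve s) i).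
  rewrite /Wfamily; case: (i == top_index).
    exact (coordwise_sum poly_fun_closed _ (fun j =>
      coordwise_scale poly_fun_closed (funring_const poly_fun_closed _) (PU j))).
  exact (coordwise_mul poly_fun_closed curve_coordwise
    (coordwise_exp poly_fun_closed i curve_sq_coordwise)).
have fR0 : free (mktuple (fun i : 'I_n => Wfamily (Y 0) (curve 0) i)).
  rewrite (_ : mktuple _ = mktuple (fun i => if i == top_index then Y 0 else c ^+ i)).
    by move: te; rewrite free_replace_top // Y0 !topcoefE linearN oppr_eq0.
  by apply: eq_mktuple => i; rewrite /Wfamily curve0 expr1n mulr1 mul1r.
have [q q0 fq] := free_off_roots PR fR0.
by exists q => // s s0 /fq; apply: Wfamily_curve_free.
Qed.

End Perturbation.

Lemma Wset_nonempty x : [pchar k] =i pred0 -> x != 0 -> exists b, Wset c x b.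
Proof.
move=> char0 x0; have [tx0 | tx] := eqVneq (topcoef x c) 0; last first.
  exists 1; rewrite /Wset /Vset expr1n invr1 !mulr1.
  by split=> //; split=> //; apply: unitr1.
have [e te] := topcoef_mul_neq0 (tangent_neq0 char0 x0).
have [q1 q1_0 unit1] := curve_unit_off_roots e.
have [q2 q2_0 free2] := curve_pow_free_off_roots e.
have [q3 q3_0 free3] := Wfamily_curve_off_roots tx0 te.
have [s] : exists s, ('X * q1 * q2 * q3).[s] != 0.
  by apply: pchar0_exists_nonroot char0 _; rewrite !mulf_neq0 ?polyX_eq0.
rewrite !hornerM hornerX !mulf_eq0 !negb_or -!andbA => /and4P[s0 /unit1 bU /free2 fd q3s].
by exists (curve e s); apply/(Wset_unitE _ bU); split; last exact: free3.
Qed.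

End SimpleExtension.

Theorem lemma3p7 (k : fieldType) (S : falgType k)
  (char0 : [pchar k] =i pred0)
  (c : S) (hc : primitive c) (x : S) (hx : x != 0) :
  (exists b, Wset c x b) /\ open_in_units (Wset c x).
Proof. by split; [apply: Wset_nonempty | apply: Wset_open]. Qed.
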